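(* Let $K$ be a compact subset of a Banach space $X$, and let $\alpha>0$, $C_1>0$, $r>0$. If $d_n(K)_X\le C_1e^{-rn^\alpha}$ for all integers $n\ge0$, then there are constants $C_2,C_3>0$ depending only on $C_1$, $r$ and $\alpha$ such that $\varepsilon_n(K)_X\le C_2e^{-C_3n^{\alpha/(\alpha+1)}}$ for all $n\ge1$.
   Context: Kolmogorov $n$-width: $d_n(F)_X=\inf_{\dim V=n}\sup_{f\in F}\inf_{g\in V}\|f-g\|_X$ (infimum over $n$-dimensional subspaces $V\subset X$). Entropy numbers: $\varepsilon_n(F)_X=\inf\{\varepsilon>0: F\text{ is covered by }2^n\text{ balls of radius }\varepsilon\text{ in }X\}$. *)

From HB Require Import structures.
From mathcomp Require Import all_boot all_order all_algebra.
From mathcomp Require Import all_classical all_reals all_analysis.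
Set Implicit Arguments. Unset Strict Implicit. Unset Printing Implicit Defensive.
Import Order.TTheory GRing.Theory Num.Theory.
Import numFieldNormedType.Exports.
Local Open Scope classical_set_scope.
Local Open Scope ring_scope.

Section Widths.
Variables (R : realType) (X : normedModType R).

Definition lin_indep (n : nat) (v : 'I_n -> X) : Prop :=
  forall c : 'I_n -> R, \sum_(i < n) c i *: v i = 0 -> forall i, c i = 0.

Definition span_of (n : nat) (v : 'I_n -> X) : set X :=
  [set \sum_(i < n) c i *: v i | c in [set: 'I_n -> R]].

Definition subspaces_dim (n : nat) : set (set X) :=
  [set span_of v | v in [set v : 'I_n -> X | lin_indep v]].

Definition dist_to (f : X) (V : set X) : \bar R :=
  ereal_inf [set (`|f - g|)%:E | g in V].

Definition kolmogorov_width (F : set X) (n : nat) : \bar R :=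
  ereal_inf [set ereal_sup [set dist_to f V | f in F] | V in subspaces_dim n].

Definition covered_by (F : set X) (n : nat) (eps : R) : Prop :=
  exists c : 'I_(2 ^ n) -> X, forall f, F f -> exists i, `|f - c i| <= eps.

Definition entropy_number (F : set X) (n : nat) : \bar R :=
  ereal_inf [set eps%:E | eps in [set eps : R | 0 < eps /\ covered_by F n eps]].

End Widths.

From HB Require Import structures.
From mathcomp Require Import all_boot all_order all_algebra.
From mathcomp Require Import all_classical all_reals all_analysis.
From mathcomp Require Import ring lra.
Set Implicit Arguments. Unset Strict Implicit. Unset Printing Implicit Defensive.
Import Order.TTheory GRing.Theory Num.Theory.
Import numFieldNormedType.Exports.
Local Open Scope classical_set_scope.
Local Open Scope ring_scope.

(* If d_m(K) <= a, then K lies within 2a of a bounded set A in an m-dimensional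
   subspace. Such a set is covered by G^m balls of radius 2a with G of order
   (diam A / a) m, uniformly in the subspace: split off the basis vectors one at
   a time along a unit vector whose coefficient functional has norm at most 2
   (obtained from a near-best approximation of that vector by the others) and
   cut A into slabs of width comparable to a/m. Hence eps_n(K) <= 4a as soon as
   G^m <= 2^n. For a = C1 exp(-r m^alpha) we have log G ~ r m^alpha, so m may be
   taken of order n^(1/(alpha+1)), which yields the rate n^(alpha/(alpha+1)). *)

Lemma subrACA (V : zmodType) (x y z t : V) : (x - y) - (z - t) = (x - z) - (y - t).
Proof. by rewrite !opprB addrACA [RHS]addrACA (addrC (- y)). Qed.

Lemma widen_ord_lift_max k (i : 'I_k) : widen_ord (leqnSn k) i = lift ord_max i.
Proof. by apply: val_inj; rewrite [RHS]lift_max. Qed.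

Lemma mx_entry_le_norm (R : realDomainType) m n (c : 'M[R]_(m, n)) i j :
  `|c i j| <= `|c|.
Proof.
by rewrite [leRHS]/Num.norm /= mx_normrE; apply/bigmax_geP; right; exists (i, j).
Qed.

Section Estimates.
Variable R : realType.

Lemma slab_index (t t0 D h : R) (G : nat) :
  0 < h -> `|t - t0| <= 2 * D -> 4 * D / h < G%:R ->
  exists2 j : nat, (j < G)%N & `|t - (t0 - 2 * D + j%:R * h)| <= h.
Proof.
move=> h0; rewrite ler_norml => /andP[tlo thi] HG.
set y := (t - (t0 - 2 * D)) / h.
have y0 : 0 <= y by apply: divr_ge0; [lra | exact: ltW].
have y_le : y <= 4 * D / h by rewrite ler_pM2r ?invr_gt0 //; lra.
have yh : y * h = t - (t0 - 2 * D) by rewrite divfK ?gt_eqF.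
have jy : (Num.truncn y)%:R <= y by rewrite truncn_le y0.
have yj := truncnS_gt y; rewrite -natr1 in yj.
exists (Num.truncn y).
  by rewrite -(ltr_nat R) (le_lt_trans jy) // (le_lt_trans y_le).
rewrite ler_norml; apply/andP; split; nra.
Qed.

Lemma powRDr1 (x r : R) : 0 < x -> x `^ (r + 1) = x `^ r * x.
Proof. by move=> x0; rewrite powRD ?powRr1 ?ltW // (gt_eqF x0) implybT. Qed.

Lemma powR_le1 (x p : R) : 0 <= x -> x <= 1 -> 0 <= p -> x `^ p <= 1.
Proof.
move=> x0 x1 p0; have : x `^ p <= 1 `^ p by rewrite ge0_ler_powR ?nnegrE.
by rewrite powR1.
Qed.

Lemma le_expR_powR_div (alpha M : R) : 0 < alpha -> 1 <= M ->
  M <= expR (M `^ alpha / alpha).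
Proof.
move=> a0 M1; have M0 : 0 < M by lra.
rewrite -{1}(lnK (x := M)) ?posrE // ler_expR ler_pdivlMr // mulrC -ln_powR.
by apply/ltW/ln_sublinear; rewrite powR_gt0.
Qed.

Lemma count_le_exp2n (alpha r : R) (m n : nat) : 0 < alpha -> 0 < r -> (1 <= m)%N ->
  (24 + alpha^-1 + r) * m%:R `^ (alpha + 1) <= n%:R * ln 2 ->
  ((Num.truncn (24 * m%:R / expR (- r * m%:R `^ alpha))).+1 ^ m <= 2 ^ n)%N.
Proof.
move=> a0 r0 m1 Hn; set M : R := m%:R; set P := M `^ alpha.
set B := 24 + alpha^-1 + r.
have M1 : 1 <= M by rewrite /M ler1n.
have P1 : 1 <= P by rewrite /P -(powRr0 M) ler_powR // ltW.
(* 24 M e^{rP} + 1 <= e^24 M e^{rP} <= e^24 e^{P/alpha} e^{rP} = e^{BP} *)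
have G_le : (Num.truncn (24 * M / expR (- r * P))).+1%:R <= expR (B * P).
  rewrite -natr1 mulNr expRN invrK.
  have e24 : 25 <= expR 24 :> R by have := expR_ge1Dx (24 : R); lra.
  have erP : 1 <= expR (r * P) by rewrite -expR0 ler_expR mulr_ge0 //; lra.
  have MeP : 1 <= M * expR (r * P) by rewrite -[1]mul1r ler_pM.
  have := le_expR_powR_div a0 M1; rewrite -/P => M_le.
  apply: le_trans (_ : 24 * (M * expR (r * P)) + 1 <= _).
    by rewrite lerD2r mulrA truncn_le; lra.
  apply: le_trans (_ : expR 24 * (expR (P / alpha) * expR (r * P)) <= _).
    apply: le_trans (_ : 25 * (M * expR (r * P)) <= _); first lra.
    by rewrite ler_pM ?mulr_ge0 ?ler_pM ?expR_ge0 //; lra.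
  by rewrite -!expRD ler_expR /B !mulrDl [alpha^-1 * P]mulrC; lra.
rewrite -(ler_nat R) !natrX (le_trans (lerXn2r _ _ _ G_le)) ?nnegrE ?expR_ge0 //.
rewrite -expRM_natl -[2 in X in _ <= X](lnK (x := 2)) ?posrE // -expRM_natl ler_expR.
have M_pow : M `^ (alpha + 1) = M * P.
  by rewrite powRDr1 ?(lt_le_trans ltr01 M1) // mulrC.
by apply: le_trans Hn; rewrite -/B -/M M_pow mulrCA.
Qed.

Lemma nat_powR_sandwich (alpha z : R) : 0 < alpha -> 0 <= z ->
  exists m : nat, m%:R `^ (alpha + 1) <= z /\
    2^-1 `^ alpha * z `^ (alpha / (alpha + 1)) <= 1 + m%:R `^ alpha.
Proof.
move=> a0 z0; have a1 : 0 < alpha + 1 by lra.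
have beta0 : 0 <= alpha / (alpha + 1) by rewrite divr_ge0 //; lra.
have [z1|z1] := ltP z 1.
  exists 0%N; rewrite mulr0n !powR0 ?gt_eqF // addr0; split => //.
  by rewrite mulr_ile1 ?powR_ge0 ?powR_le1 //; lra.
have y1 : 1 <= z `^ (alpha + 1)^-1.
  have : 1 `^ (alpha + 1)^-1 <= z `^ (alpha + 1)^-1.
    by rewrite ge0_ler_powR ?nnegrE ?invr_ge0 //; lra.
  by rewrite powR1.
have -> : z = (z `^ (alpha + 1)^-1) `^ (alpha + 1).
  by rewrite -powRrM mulVf ?gt_eqF // powRr1 //; lra.
move: (z `^ _) y1 => y y1 {z0 z1}.
have y_lt := truncnS_gt y; rewrite -natr1 in y_lt.
have y_ge : (Num.truncn y)%:R <= y by rewrite truncn_le; lra.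
have m1 : 1 <= (Num.truncn y)%:R :> R by rewrite ler1n truncn_ge_nat //; lra.
exists (Num.truncn y); split; first by rewrite ge0_ler_powR ?nnegrE //; lra.
rewrite -powRrM (mulrC (alpha + 1)) divfK ?gt_eqF // -powRM ?invr_ge0 //; last lra.
suff : (2^-1 * y) `^ alpha <= (Num.truncn y)%:R `^ alpha by lra.
by rewrite ge0_ler_powR ?nnegrE ?mulr_ge0 ?invr_ge0 //; lra.
Qed.

End Estimates.

Section LinearIndependence.
Variables (R : realType) (X : normedModType R).

Lemma lin_indep_widen k (v : 'I_k.+1 -> X) :
  lin_indep v -> lin_indep (v \o widen_ord (leqnSn k)).
Proof.
move=> li c c0 i.
pose c' j := if unlift ord_max j is Some j' then c j' else 0.
have := li c' _ (widen_ord (leqnSn k) i); rewrite /c' widen_ord_lift_max liftK; apply.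
rewrite big_ord_recr /= unlift_none scale0r addr0 -[RHS]c0.
by apply: eq_bigr => j _; rewrite /= widen_ord_lift_max liftK.
Qed.

Lemma lin_indep_norm_lb k (v : 'I_k.+1 -> X) : lin_indep v ->
  exists2 mu : R, 0 < mu &
    forall c : 'rV[R]_k.+1, mu * `|c| <= `|\sum_i c ord0 i *: v i|.
Proof.
move=> li; pose N (c : 'rV[R]_k.+1) := `|\sum_i c ord0 i *: v i|.
have N_cont : continuous N.
  move=> c; apply: continuous_comp; last exact: norm_continuous.
  apply: cvg_big => [||i _]; [exact: add_continuous|exact: nbhs_filter|].
  by apply: cvgZr_tmp; [exact: nbhs_filter|exact: coord_continuous].
have NZ a c : N (a *: c) = `|a| * N c.
  rewrite /N -normrZ scaler_sumr; congr `|_|.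
  by apply: eq_bigr => i _; rewrite mxE scalerA.
have normalized (c : 'rV[R]_k.+1) : c != 0 -> `|(`|c|^-1 *: c)| = 1.
  by move=> c0; rewrite normrZ normfV normr_id mulVf // normr_eq0.
pose S := [set c : 'rV[R]_k.+1 | `|c| = 1].
have S0 : S !=set0.
  exists (`|const_mx 1 : 'rV[R]_k.+1|^-1 *: const_mx 1); apply: normalized.
  by apply/eqP => /matrixP/(_ ord0 ord0); rewrite !mxE => /eqP; rewrite oner_eq0.
have S_compact : compact S.
  apply: bounded_closed_compact.
    exists 1; split; first exact: num_real.
    by move=> M M1 c; rewrite /= => ->; exact: ltW.
  rewrite (_ : S = Num.norm @^-1` [set 1]) //.
  by apply: (proj1 (continuous_closedP _)); [exact: norm_continuous|exact: closed_eq].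
have [c /set_mem Sc minN] :=
  EVT_min_rV S0 S_compact (continuous_subspaceT (N_cont : continuous N)).
exists (N c) => [|d].
  rewrite lt_def normr_ge0 andbT normr_eq0; apply: contraTN isT => /eqP Nc0.
  have c0 : c = 0 by apply/matrixP => i j; rewrite (ord1 i) mxE; exact: li Nc0 j.
  by move: Sc; rewrite /S /= c0 normr0 => /esym/eqP; rewrite oner_eq0.
have [->|d0] := eqVneq d 0; first by rewrite normr0 mulr0.
have := minN _ (mem_set (normalized _ d0)).
by rewrite NZ normfV normr_id ler_pdivlMl ?normr_gt0 // mulrC.
Qed.

Lemma lin_indep_dist_gt0 k (v : 'I_k.+1 -> X) : lin_indep v ->
  exists2 mu : R, 0 < mu & forall a : 'I_k -> R,
    mu <= `|v ord_max - \sum_(i < k) a i *: v (widen_ord (leqnSn k) i)|.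
Proof.
move=> /lin_indep_norm_lb[mu mu0 Hmu]; exists mu => // a.
pose d := \row_(i < k.+1) (if unlift ord_max i is Some j then - a j else 1).
have d1 : 1 <= `|d| by have := mx_entry_le_norm d ord0 ord_max; rewrite mxE unlift_none normr1.
have -> : v ord_max - \sum_(i < k) a i *: v (widen_ord (leqnSn k) i) =
    \sum_i d ord0 i *: v i.
  rewrite big_ord_recr /= mxE unlift_none scale1r addrC -sumrN; congr (_ + _).
  by apply: eq_bigr => i _; rewrite widen_ord_lift_max mxE liftK scaleNr.
by apply: le_trans (Hmu d); rewrite ler_peMr // ltW.
Qed.

(* [a0] gives a near-best approximation of the last vector by the others: its
   residual is at most twice their distance, whence the factor 2. *)
Lemma lin_indep_last_coord_le k (v : 'I_k.+1 -> X) : lin_indep v ->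
  let v' := v \o widen_ord (leqnSn k) in
  exists a0 : 'I_k -> R, 0 < `|v ord_max - \sum_(i < k) a0 i *: v' i| /\
    forall c : 'I_k.+1 -> R,
      `|c ord_max| * `|v ord_max - \sum_(i < k) a0 i *: v' i| <=
      2 * `|\sum_i c i *: v i|.
Proof.
move=> /lin_indep_dist_gt0[mu mu0 mu_le] v'.
pose S := [set `|v ord_max - \sum_(i < k) a i *: v' i| | a in [set: 'I_k -> R]].
have S0 : S !=set0 by exists `|v ord_max - \sum_(i < k) 0 *: v' i|, (fun=> 0).
have S_lb : lbound S mu by move=> _ [a _ <-]; exact: mu_le.
have inf_gt0 : 0 < inf S := lt_le_trans mu0 (lb_le_inf S0 S_lb).
have [_ [a0 _ <-] a0_near] := inf_adherent inf_gt0 (conj S0 (ex_intro _ mu S_lb)).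
exists a0; split=> [|c]; first exact: lt_le_trans mu0 (mu_le a0).
have [c0|cn0] := eqVneq (c ord_max) 0; first by rewrite c0 normr0 mul0r mulr_ge0.
pose a i := - (c (widen_ord (leqnSn k) i) / c ord_max).
have -> : \sum_i c i *: v i = c ord_max *: (v ord_max - \sum_(i < k) a i *: v' i).
  rewrite big_ord_recr /= addrC scalerBr scaler_sumr -sumrN; congr (_ + _).
  by apply: eq_bigr => i _; rewrite scalerA mulrN scaleNr opprK mulrCA mulfV ?mulr1.
rewrite normrZ mulrCA ler_wpM2l // (le_trans (ltW a0_near)) //.
rewrite -mulr2n -[_ *+ 2]mulr_natl ler_wpM2l //.
by apply: ge_inf; [exists mu | exists a].
Qed.

Lemma lin_indep_split_last k (v : 'I_k.+1 -> X) : lin_indep v ->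
  let v' := v \o widen_ord (leqnSn k) in
  exists e : X, exists t : ('I_k.+1 -> R) -> R, exists w : ('I_k.+1 -> R) -> X,
  [/\ `|e| = 1, forall c, span_of v' (w c),
      forall c, \sum_i c i *: v i = w c + t c *: e &
      forall c1 c2,
        `|t c1 - t c2| <= 2 * `|\sum_i c1 i *: v i - \sum_i c2 i *: v i|].
Proof.
move=> /lin_indep_last_coord_le[a0 [+ t_le]] v'.
set w0 := \sum_(i < k) a0 i *: v' i in t_le *; set rho0 := `|_| in t_le * => rho0_gt0.
pose t (c : 'I_k.+1 -> R) := c ord_max * rho0.
exists (rho0^-1 *: (v ord_max - w0)), t,
  (fun c => \sum_(i < k) (c (widen_ord (leqnSn k) i) + c ord_max * a0 i) *: v' i).
split=> [|c|c|c1 c2].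
- by rewrite normrZ ger0_norm ?invr_ge0 ?ltW // mulVf // gt_eqF.
- by exists (fun i => c (widen_ord (leqnSn k) i) + c ord_max * a0 i).
- rewrite /t scalerA -mulrA mulfV ?gt_eqF // mulr1 scalerBr addrA big_ord_recr /=.
  rewrite (_ : \sum_(i < k) (_ + c ord_max * a0 i) *: v' i =
    \sum_(i < k) c (widen_ord (leqnSn k) i) *: v' i + c ord_max *: w0).
    by rewrite addrAC addrK.
  rewrite /w0 scaler_sumr -big_split; apply: eq_bigr => i _.
  by rewrite scalerDl scalerA.
- rewrite /t -mulrBl normrM (ger0_norm (ltW rho0_gt0)).
  apply: le_trans (t_le (fun i => c1 i - c2 i)) _; rewrite -sumrB.
  by under [X in _ <= 2 * `|X|]eq_bigr => i _ do rewrite -scalerBl.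
Qed.

End LinearIndependence.

Section Coverings.
Variables (R : realType) (X : normedModType R).

Definition coverable (A : set X) (N : nat) (rho : R) :=
  exists s : seq X, (size s <= N)%N /\
    forall x, A x -> exists2 p, p \in s & `|x - p| <= rho.

Lemma coverable_sub (A B : set X) N rho :
  A `<=` B -> coverable B N rho -> coverable A N rho.
Proof. by move=> AB [s [sz Bs]]; exists s; split => // x /AB /Bs. Qed.

Lemma coverable_bigcup (B : nat -> set X) (N M : nat) rho :
  (forall j, (j < N)%N -> coverable (B j) M rho) ->
  coverable [set x | exists2 j, (j < N)%N & B j x] (N * M) rho.
Proof.
elim: N => [|N IH] BM; first by exists [::]; split => // x [j].
have [s1 [sz1 cov1]] := IH (fun j lt => BM j (ltnW lt)).
have [s2 [sz2 cov2]] := BM N (ltnSn N).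
exists (s2 ++ s1); split; first by rewrite size_cat mulSn leq_add.
move=> x [j]; rewrite ltnS leq_eqVlt => /orP[/eqP -> /cov2[p ps xp]|jN Bjx].
  by exists p; rewrite ?mem_cat ?ps.
have [p ps xp] := cov1 x (ex_intro2 _ _ j jN Bjx).
by exists p; rewrite ?mem_cat ?ps ?orbT.
Qed.

Lemma coverable_near (A B : set X) (u : X) N rho s :
  coverable B N rho -> (forall x, A x -> exists2 y, B y & `|x - (y + u)| <= s) ->
  coverable A N (rho + s).
Proof.
move=> [c [sz Bc]] AB; exists [seq p + u | p <- c]; split; first by rewrite size_map.
move=> x /AB[y /Bc[p pc yp] xy]; exists (p + u); first exact: map_f.
have -> : x - (p + u) = (y - p) + (x - (y + u)) by rewrite addrCA (addrC y) addrKA opprD.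
by rewrite (le_trans (ler_normD _ _)) // lerD.
Qed.

Lemma entropy_number_le_coverable (K : set X) n N eps :
  0 < eps -> (N <= 2 ^ n)%N -> coverable K N eps -> (entropy_number K n <= eps%:E)%E.
Proof.
move=> eps0 Nn [s [sz Ks]]; apply: ereal_inf_lbound; exists eps => //; split => //.
exists (fun i => nth 0 s i) => f /Ks[p ps fp].
have ix : (index p s < 2 ^ n)%N by rewrite (leq_trans _ Nn) ?(leq_trans _ sz) ?index_mem.
by exists (Ordinal ix); rewrite /= nth_index.
Qed.

(* Induction on k: cut A into G slabs of width 2h along the unit vector split
   off the last basis vector; each slab, moved along that vector, has diameter
   at most D + 2h in the span of the first k vectors, whence the D + 2kh. *)
Lemma coverable_span k (v : 'I_k -> X) (A : set X) (D h : R) (G : nat) :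
  lin_indep v -> 0 < h -> 0 <= D -> A `<=` span_of v ->
  (forall x y, A x -> A y -> `|x - y| <= D) ->
  4 * (D + 2 * k%:R * h) / h < G%:R ->
  coverable A (G ^ k) (k%:R * h).
Proof.
elim: k v A D => [|k IH] v A D li h0 D0 Asp Adiam HG.
  exists [:: 0]; split => // x /Asp[c _ <-].
  by exists 0; rewrite ?inE // big_ord0 subr0 normr0 mul0r.
have [e [t [w [e1 w_span decomp t_lip]]]] := lin_indep_split_last li.
have [[x0 Ax0]|A0] := pselect (A !=set0); last first.
  by exists [::]; split => // x Ax; exfalso; apply: A0; exists x.
have [c0 _ x0E] := Asp _ Ax0; rewrite -x0E in Ax0.
pose tau j := t c0 - 2 * D + j%:R * h.
pose slab j := [set x | A x /\ exists c, \sum_i c i *: v i = x /\ `|t c - tau j| <= h].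
have t_le c1 c2 : A (\sum_i c1 i *: v i) -> A (\sum_i c2 i *: v i) ->
    `|t c1 - t c2| <= 2 * D.
  by move=> A1 A2; rewrite (le_trans (t_lip _ _)) // ler_wpM2l // Adiam.
have A_slabs : A `<=` [set x | exists2 j, (j < G)%N & slab j x].
  move=> x Ax; have [c _ xE] := Asp _ Ax; rewrite -xE in Ax *.
  have HG' : 4 * D / h < G%:R.
    apply: le_lt_trans HG; rewrite ler_pM2r ?invr_gt0 // ler_pM2l //.
    by rewrite lerDl; apply: mulr_ge0 (ltW h0); exact: mulr_ge0.
  have [j jG tj] := slab_index h0 (t_le c c0 Ax Ax0) HG'.
  by exists j => //; split => //; exists c.
have slab_cover j : coverable (slab j) (G ^ k) (k.+1%:R * h).
  pose B := [set w c | c in [set c | A (\sum_i c i *: v i) /\ `|t c - tau j| <= h]].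
  have wE c : w c = \sum_i c i *: v i - t c *: e by rewrite decomp addrK.
  rewrite -addn1 natrD mulrDl mul1r; apply: (coverable_near (B := B) (u := tau j *: e)).
    apply: (IH _ _ (D + 2 * h) (lin_indep_widen li)) => //.
    - by rewrite addr_ge0 // mulr_ge0 // ltW.
    - by move=> _ [c _ <-]; exact: w_span.
    - move=> _ _ [c1 [A1 t1] <-] [c2 [A2 t2] <-].
      rewrite !wE subrACA -scalerBl (le_trans (ler_normB _ _)) // lerD ?Adiam //.
      have := ler_normB (t c1 - tau j) (t c2 - tau j).
      rewrite normrZ e1 mulr1 subrACA subrr subr0; lra.
    - rewrite (_ : D + 2 * h + 2 * k%:R * h = D + 2 * k.+1%:R * h) //.
      by rewrite -natr1; ring.
  move=> x [Ax [c [xE tc]]]; exists (w c); first by exists c => //; rewrite /= xE.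
  by rewrite -xE decomp opprD addrACA subrr add0r -scalerBl normrZ e1 mulr1.
by apply: coverable_sub A_slabs _; rewrite expnS; exact: coverable_bigcup.
Qed.

Lemma kolmogorov_width_approx (K : set X) m (a : R) : 0 < a ->
  (kolmogorov_width K m <= a%:E)%E ->
  exists v : 'I_m -> X, lin_indep v /\
    forall f, K f -> exists c : 'I_m -> R, `|f - \sum_i c i *: v i| < 2 * a.
Proof.
move=> a0 HK; have : (kolmogorov_width K m < (2 * a)%:E)%E.
  by apply: le_lt_trans HK _; rewrite lte_fin; lra.
move=> /ereal_inf_lt[_ [_ [v li <-] <-] sup_lt]; exists v; split => // f Kf.
have : (dist_to f (span_of v) < (2 * a)%:E)%E.
  by apply: le_lt_trans sup_lt; apply: ereal_sup_ubound; exists f.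
by move=> /ereal_inf_lt[_ [_ [c _ <-] <-]]; rewrite lte_fin; exists c.
Qed.

Lemma kolmogorov_width0_norm_lt (K : set X) (a : R) : 0 < a ->
  (kolmogorov_width K 0 <= a%:E)%E -> forall f, K f -> `|f| < 2 * a.
Proof.
move=> a0 /(kolmogorov_width_approx a0)[v [_ approx]] f /approx[c].
by rewrite big_ord0 subr0.
Qed.

Lemma entropy_number_le_norm (K : set X) n (b : R) : 0 < b ->
  (forall f, K f -> `|f| <= b) -> (entropy_number K n <= b%:E)%E.
Proof.
move=> b0 Kb; apply: (entropy_number_le_coverable (N := 1)) => //; first by rewrite expn_gt0.
by exists [:: 0]; split => // f Kf; exists 0; rewrite ?inE ?subr0 ?Kb.
Qed.

Lemma entropy_number_le_width (K : set X) (m n G : nat) (a b : R) :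
  (0 < m)%N -> 0 < a -> 0 <= b -> (forall f, K f -> `|f| <= b) ->
  (kolmogorov_width K m <= a%:E)%E ->
  (4 * b / a + 16) * m%:R < G%:R -> (G ^ m <= 2 ^ n)%N ->
  (entropy_number K n <= (4 * a)%:E)%E.
Proof.
move=> m0 a0 b0 Kb HK HG Gn.
have [v [li approx]] := kolmogorov_width_approx a0 HK.
pose A := [set g | span_of v g /\ exists2 f, K f & `|f - g| < 2 * a].
have A_norm g : A g -> `|g| <= b + 2 * a.
  move=> [_ [f Kf fg]]; have -> : g = f - (f - g) by rewrite opprB addrC subrK.
  by rewrite (le_trans (ler_normB _ _)) // lerD ?Kb ?ltW.
have A_diam x y : A x -> A y -> `|x - y| <= 2 * b + 4 * a.
  move=> Ax Ay; rewrite (le_trans (ler_normB _ _)) //.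
  by have := A_norm _ Ax; have := A_norm _ Ay; lra.
have m_gt0 : 0 < m%:R :> R by rewrite ltr0n.
pose h := 2 * a / m%:R.
have mh : m%:R * h = 2 * a by rewrite mulrC divfK ?gt_eqF.
have A_cover : coverable A (G ^ m) (m%:R * h).
  apply: coverable_span li _ _ _ A_diam _ => //.
  - by rewrite divr_gt0 ?mulr_gt0.
  - lra.
  - by move=> g [].
  - suff -> : 4 * (2 * b + 4 * a + 2 * m%:R * h) / h = (4 * b / a + 16) * m%:R by [].
    by rewrite /h; field; rewrite !gt_eqF.
apply: entropy_number_le_coverable Gn _; first by rewrite mulr_gt0.
rewrite (_ : 4 * a = m%:R * h + 2 * a); last by rewrite mh; ring.
apply: (coverable_near (u := 0) A_cover) => f Kf; have [c fc] := approx f Kf.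
exists (\sum_i c i *: v i); last by rewrite addr0 ltW.
by split; [exists c | exists f].
Qed.

Lemma entropy_number_le_exp_width (K : set X) (alpha C1 r : R) (m n : nat) :
  0 < alpha -> 0 < C1 -> 0 < r -> (forall f, K f -> `|f| <= 2 * C1) ->
  (kolmogorov_width K m <= (C1 * expR (- r * m%:R `^ alpha))%:E)%E ->
  (24 + alpha^-1 + r) * m%:R `^ (alpha + 1) <= n%:R * ln 2 ->
  (entropy_number K n <= (4 * (C1 * expR (- r * m%:R `^ alpha)))%:E)%E.
Proof.
move=> a0 C10 r0 Kb HK Hn; have [m0|m_gt0] := posnP m.
  rewrite m0 mulr0n powR0 ?gt_eqF // mulr0 expR0 mulr1.
  by rewrite (le_trans (entropy_number_le_norm _ _ Kb)) ?lee_fin //; lra.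
set E := expR _ in HK *; have E0 : 0 < E := expR_gt0 _.
have E1 : E <= 1 by rewrite -expR0 ler_expR mulNr oppr_le0 mulr_ge0 ?powR_ge0 ?ltW.
apply: (@entropy_number_le_width K m n (Num.truncn (24 * m%:R / E)).+1 _ (2 * C1)) => //.
- by rewrite mulr_gt0.
- lra.
- apply: le_lt_trans (truncnS_gt _); rewrite ler_pdivlMr // mulrAC.
  have -> : (4 * (2 * C1) / (C1 * E) + 16) * E = 8 + 16 * E.
    by field; rewrite !gt_eqF.
  have : 1 <= m%:R :> R by rewrite ler1n.
  nra.
- exact: count_le_exp2n.
Qed.

End Coverings.

Theorem theorem4p5 (R : realType) (alpha C1 r : R) :
  0 < alpha -> 0 < C1 -> 0 < r ->
  exists C2 C3 : R, 0 < C2 /\ 0 < C3 /\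
    forall (X : completeNormedModType R) (K : set X),
      compact K ->
      (forall n : nat,
         (kolmogorov_width K n <= (C1 * expR (- r * (n%:R `^ alpha)))%:E)%E) ->
      forall n : nat, (1 <= n)%N ->
        (entropy_number K n <=
           (C2 * expR (- C3 * (n%:R `^ (alpha / (alpha + 1)))))%:E)%E.
Proof.
move=> a0 C10 r0; set B := 24 + alpha^-1 + r; set beta := alpha / (alpha + 1).
have B0 : 0 < B by rewrite /B; have := invr_gt0 alpha; rewrite a0; lra.
have c0 : 0 < ln 2 / B by rewrite divr_gt0 // ln_gt0 //; lra.
exists (4 * C1 * expR r), (r * 2^-1 `^ alpha * (ln 2 / B) `^ beta).
split; first by rewrite !mulr_gt0 ?expR_gt0.
split; first by rewrite !mulr_gt0 ?powR_gt0 ?invr_gt0.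
move=> X K _ HK n _.
have Kb f : K f -> `|f| <= 2 * C1.
  move: (HK 0%N); rewrite mulr0n powR0 ?gt_eqF // mulr0 expR0 mulr1 => HK0.
  by move=> /(kolmogorov_width0_norm_lt C10 HK0)/ltW.
set z := n%:R * (ln 2 / B).
have z0 : 0 <= z by rewrite mulr_ge0 // ltW.
have [m [mz zm]] := nat_powR_sandwich a0 z0; rewrite -/beta in zm.
apply: le_trans (entropy_number_le_exp_width a0 C10 r0 Kb (HK m) _) _.
  have -> : n%:R * ln 2 = B * z by rewrite /z; field; rewrite gt_eqF.
  exact: (ler_wpM2l (ltW B0) mz).
rewrite lee_fin mulNr -!mulrA ler_pM2l // ler_pM2l // -expRD ler_expR.
rewrite mulNr -!mulrA -(powRM _ (ltW c0) (ler0n _ n)) [_ * n%:R]mulrC -/z.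
have := ler_wpM2l (ltW r0) zm; lra.
Qed.
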